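(* Let $\{\varphi_i\}_{i=1}^N$ be a linearly independent set of unit vectors in $\mathbb{R}^N$ such that the family of hyperplanes $\{\varphi_i^{\perp}\}_{i=1}^N$ does norm retrieval in $\mathbb{R}^N$. Then $\{\varphi_i\}_{i=1}^N$ is an orthonormal basis for $\mathbb{R}^N$.
   Context: For a nonzero vector $\varphi\in\mathbb{R}^N$, $\varphi^\perp$ denotes the hyperplane $\{x\in\mathbb{R}^N:\langle x,\varphi\rangle=0\}$. A family of subspaces $\{W_i\}_{i=1}^M$ of $\mathbb{R}^N$ with orthogonal projections $\{P_i\}_{i=1}^M$ does norm retrieval if for all $x,y\in\mathbb{R}^N$, $\|P_ix\|=\|P_iy\|$ for all $i\in\{1,\dots,M\}$ implies $\|x\|=\|y\|$. *)

From mathcomp Require Import all_boot all_order all_algebra.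
Set Implicit Arguments. Unset Strict Implicit. Unset Printing Implicit Defensive.
Import Order.TTheory GRing.Theory Num.Theory.
Local Open Scope ring_scope.

(* Vectors of R^N are row vectors 'rV[R]_N over a real closed field R
   (e.g. the real numbers). *)

Definition dotv (R : rcfType) (N : nat) (u v : 'rV[R]_N) : R :=
  \sum_(k < N) u ord0 k * v ord0 k.

Definition normv (R : rcfType) (N : nat) (u : 'rV[R]_N) : R :=
  Num.sqrt (dotv u u).

(* Orthogonal projection onto the hyperplane phi^perp (phi nonzero):
   P x = x - (<x,phi>/<phi,phi>) phi. *)
Definition hyp_proj (R : rcfType) (N : nat) (phi x : 'rV[R]_N) : 'rV[R]_N :=
  x - (dotv x phi / dotv phi phi) *: phi.

Definition hyperplanes_norm_retrieval (R : rcfType) (N M : nat)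
    (phi : 'I_M -> 'rV[R]_N) : Prop :=
  forall x y : 'rV[R]_N,
    (forall i, normv (hyp_proj (phi i) x) = normv (hyp_proj (phi i) y)) ->
    normv x = normv y.

Definition lin_indep (R : rcfType) (N M : nat) (phi : 'I_M -> 'rV[R]_N) : Prop :=
  row_free (\matrix_(i < M) phi i).

Definition orthonormal_family (R : rcfType) (N M : nat)
    (phi : 'I_M -> 'rV[R]_N) : Prop :=
  forall i j, dotv (phi i) (phi j) = (i == j)%:R.

From mathcomp Require Import all_boot all_order all_algebra.
From mathcomp Require Import ring lra.

Set Implicit Arguments.
Unset Strict Implicit.
Unset Printing Implicit Defensive.

Import GRing.Theory Num.Theory.
Local Open Scope ring_scope.

(* Let psi_i be the dual basis of the phi_i, and write |x|^2 - <x,phi_k>^2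
   for the squared norm of the projection of x onto phi_k^perp.  If two
   vectors X, Y satisfy <X,phi_k><Y,phi_k> = <X,Y> for every k, then
   x = X + Y and y = X - Y have equal projection norms onto every
   hyperplane while |x|^2 - |y|^2 = 4<X,Y>; norm retrieval thus forces
   <X,Y> = 0.  For i != j such a pair is built from X = t psi_i + z and
   Y = t^-1 psi_i + z, where z is a combination of the psi_k (k != i) with
   coefficients +-1 and t + t^-1 = (1 - |psi_i|^2 - |z|^2) / <psi_i,z>;
   Bessel's inequality applied to z +- psi_i makes this ratio at least 2
   in absolute value whenever <psi_i,z> != 0, so such a t exists and
   <psi_i,z> = 0.  Choosing two sign patterns differing only at j gives
   <psi_i,psi_j> = 0.  The Gram matrix of the phi_i is the inverse of that
   of the psi_i, hence diagonal, and its diagonal is 1. *)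

Section Dotv.
Variables (R : rcfType) (N : nat).
Implicit Types (u v w : 'rV[R]_N) (a : R).

Lemma dotvC u v : dotv u v = dotv v u.
Proof. by apply: eq_bigr => k _; rewrite mulrC. Qed.

Lemma dotvDl u v w : dotv (u + v) w = dotv u w + dotv v w.
Proof. by rewrite /dotv -big_split; apply: eq_bigr => k _; rewrite !mxE mulrDl. Qed.

Lemma dotvNl u w : dotv (- u) w = - dotv u w.
Proof. by rewrite /dotv -sumrN; apply: eq_bigr => k _; rewrite !mxE mulNr. Qed.

Lemma dotvZl a u w : dotv (a *: u) w = a * dotv u w.
Proof. by rewrite /dotv mulr_sumr; apply: eq_bigr => k _; rewrite !mxE mulrA. Qed.

Lemma dotvDr u v w : dotv w (u + v) = dotv w u + dotv w v.
Proof. by rewrite dotvC dotvDl !(dotvC w). Qed.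

Lemma dotvNr u w : dotv w (- u) = - dotv w u.
Proof. by rewrite dotvC dotvNl dotvC. Qed.

Lemma dotvZr a u w : dotv w (a *: u) = a * dotv w u.
Proof. by rewrite dotvC dotvZl dotvC. Qed.

Lemma dotv_ge0 u : 0 <= dotv u u.
Proof. by apply: sumr_ge0 => k _; rewrite -expr2 sqr_ge0. Qed.

Lemma sqr_normv u : normv u ^+ 2 = dotv u u.
Proof. exact/sqr_sqrtr/dotv_ge0. Qed.

Lemma dotv_polarization u v :
  dotv (u + v) (u + v) - dotv (u - v) (u - v) = 4 * dotv u v.
Proof. by rewrite !(dotvDl, dotvDr, dotvNl, dotvNr) (dotvC v u); ring. Qed.

Lemma dotv_hyp_proj (phi x : 'rV[R]_N) : dotv phi phi = 1 ->
  dotv (hyp_proj phi x) (hyp_proj phi x) = dotv x x - dotv x phi ^+ 2.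
Proof.
move=> phi1; rewrite /hyp_proj phi1 divr1.
by rewrite !(dotvDl, dotvDr, dotvNl, dotvNr, dotvZl, dotvZr) phi1 (dotvC phi x); ring.
Qed.

Lemma sqr_dotv_le (phi x : 'rV[R]_N) : dotv phi phi = 1 ->
  dotv x phi ^+ 2 <= dotv x x.
Proof. by move=> phi1; rewrite -subr_ge0 -dotv_hyp_proj ?dotv_ge0. Qed.

End Dotv.

Lemma dotv_row (R : rcfType) (m n N : nat) (A : 'M[R]_(m, N)) (B : 'M_(n, N)) i j :
  dotv (row i A) (row j B) = (A *m B^T) i j.
Proof. by rewrite mxE; apply: eq_bigr => k _; rewrite !mxE. Qed.

Lemma addr_invr_surj (R : rcfType) (c : R) : 2 <= `|c| -> exists t, t + t^-1 = c.
Proof.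
move=> c_ge2; have D_ge0 : 0 <= c ^+ 2 - 4.
  by rewrite subr_ge0 -real_normK ?num_real //; nra.
set r := Num.sqrt (c ^+ 2 - 4).
have r2 : r ^+ 2 = c ^+ 2 - 4 by rewrite sqr_sqrtr.
have tt' : (c + r) / 2 * ((c - r) / 2) = 1.
  have -> : (c + r) / 2 * ((c - r) / 2) = (c ^+ 2 - r ^+ 2) / 4 by field.
  by rewrite r2; field.
have t_neq0 : (c + r) / 2 != 0.
  by apply: contra_eq_neq tt' => ->; rewrite mul0r eq_sym oner_neq0.
exists ((c + r) / 2).
have -> : ((c + r) / 2)^-1 = (c - r) / 2.
  by rewrite -[RHS](mulKf t_neq0) tt' mulr1.
by field.
Qed.

Section NormRetrieval.
Variables (R : rcfType) (N M : nat) (phi : 'I_M -> 'rV[R]_N).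
Hypothesis phi_unit : forall k, dotv (phi k) (phi k) = 1.
Hypothesis phi_nr : hyperplanes_norm_retrieval phi.

Lemma norm_retrieval_dotv x y :
  (forall k, dotv x x - dotv x (phi k) ^+ 2 = dotv y y - dotv y (phi k) ^+ 2) ->
  dotv x x = dotv y y.
Proof.
move=> eq_proj; rewrite -!sqr_normv; congr (_ ^+ 2); apply: phi_nr => k.
by rewrite /normv !dotv_hyp_proj ?eq_proj.
Qed.

Lemma norm_retrieval_dotv_eq0 X Y :
  (forall k, dotv X (phi k) * dotv Y (phi k) = dotv X Y) -> dotv X Y = 0.
Proof.
move=> XY_coord.
suff : 4 * dotv X Y = 0 by move/eqP; rewrite mulf_eq0 pnatr_eq0 => /eqP.
rewrite -dotv_polarization; apply/eqP; rewrite subr_eq0; apply/eqP.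
apply: norm_retrieval_dotv => k.
have := dotv_polarization X Y; rewrite -(XY_coord k) !(dotvDl, dotvNl); nra.
Qed.

Lemma norm_retrieval_orthogonal i u z :
  (forall k, dotv u (phi k) = (k == i)%:R) ->
  dotv z (phi i) = 0 -> (forall k, k != i -> dotv z (phi k) ^+ 2 = 1) ->
  dotv u z = 0.
Proof.
move=> u_coord z_i z_coord; apply/eqP/negPn/negP => p_neq0.
set p := dotv u z in p_neq0; set S := dotv u u + dotv z z.
have u_i : dotv u (phi i) = 1 by rewrite u_coord eqxx.
have Spz : 1 <= S + 2 * p.
  have := sqr_dotv_le (z + u) (phi_unit i).
  by rewrite !(dotvDl, dotvDr) z_i u_i (dotvC z u) -/p /S; lra.
have Smz : 1 <= S - 2 * p.
  have := sqr_dotv_le (z - u) (phi_unit i).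
  by rewrite !(dotvDl, dotvDr, dotvNl, dotvNr) z_i u_i (dotvC z u) -/p /S; lra.
have [t t_inv] : exists t, t + t^-1 = (1 - S) / p.
  apply: addr_invr_surj; rewrite normf_div ler_pdivlMr ?normr_gt0 //.
  have S_ge1 : 0 <= S - 1 by lra.
  rewrite distrC (ger0_norm S_ge1).
  by have [p_ge0|p_lt0] := lerP 0 p; [rewrite ger0_norm | rewrite ltr0_norm]; lra.
have t_neq0 : t != 0.
  apply: contra_eq_neq t_inv => ->; rewrite invr0 addr0 eq_sym mulf_eq0 invr_eq0.
  by rewrite (negPf p_neq0) orbF subr_eq0; apply/eqP; lra.
have XY : dotv (t *: u + z) (t^-1 *: u + z) = 1.
  rewrite !(dotvDl, dotvDr, dotvZl, dotvZr) (dotvC z u) -/p mulrA mulfV // mul1r.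
  have -> : dotv u u + t * p + (t^-1 * p + dotv z z) = S + (t + t^-1) * p.
    by rewrite /S; ring.
  by rewrite t_inv divfK //; ring.
suff : dotv (t *: u + z) (t^-1 *: u + z) = 0 by rewrite XY; apply/eqP/oner_neq0.
apply: norm_retrieval_dotv_eq0 => k; rewrite XY !(dotvDl, dotvZl).
have [->|k_neq_i] := eqVneq k i; first by rewrite u_i z_i !mulr1 !addr0 mulfV.
by rewrite u_coord (negPf k_neq_i) !mulr0 !add0r -expr2 z_coord.
Qed.

End NormRetrieval.

Lemma diag_mulmx_eq1 (F : pzRingType) (n : nat) (D G : 'M[F]_n) :
  is_diag_mx D -> D *m G = 1%:M -> (forall i, G i i = 1) -> G = 1%:M.
Proof.
move=> /diag_mxP [d ->] DG1 G_diag1.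
suff d1 : d = const_mx 1 by rewrite -DG1 d1 diag_const_mx mul1mx.
apply/rowP => i; have /matrixP /(_ i i) := DG1.
by rewrite mul_diag_mx !mxE G_diag1 eqxx mulr1.
Qed.

Definition dual_basis (R : comUnitRingType) (N : nat) (phi : 'I_N -> 'rV[R]_N) :
  'M[R]_N := (invmx (\matrix_(i < N) phi i))^T.

Section DualBasis.
Variables (R : rcfType) (N : nat) (phi : 'I_N -> 'rV[R]_N).
Hypothesis phi_free : lin_indep phi.
Local Notation A := (\matrix_(i < N) phi i).
Local Notation B := (dual_basis phi).

Lemma lin_indep_unitmx : A \in unitmx.
Proof. by rewrite -row_free_unit. Qed.

Lemma dual_basis_mul_trmx : B *m A^T = 1%:M.
Proof. by rewrite -trmx_mul mulmxV ?trmx1 ?lin_indep_unitmx. Qed.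

Lemma dotv_mul_dual_basis (w : 'rV[R]_N) k : dotv (w *m B) (phi k) = w 0 k.
Proof.
by rewrite -[w *m B](row_id 0) -(rowK phi k) dotv_row -mulmxA dual_basis_mul_trmx mulmx1.
Qed.

Lemma dotv_dual_basis i k : dotv (row i B) (phi k) = (k == i)%:R.
Proof. by rewrite rowE dotv_mul_dual_basis mxE eq_sym. Qed.

Lemma gram_dual_basisK : (B *m B^T) *m (A *m A^T) = 1%:M.
Proof.
rewrite /dual_basis trmxK mulmxA -(mulmxA _ (invmx A)) mulVmx ?lin_indep_unitmx //.
by rewrite mulmx1 -/(dual_basis phi) dual_basis_mul_trmx.
Qed.

Hypothesis phi_unit : forall k, dotv (phi k) (phi k) = 1.
Hypothesis phi_nr : hyperplanes_norm_retrieval phi.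

Lemma dual_basis_orthogonal i j : i != j -> dotv (row i B) (row j B) = 0.
Proof.
move=> i_neq_j.
have orth_signs (c : 'rV_N) : c 0 i = 0 -> (forall k, k != i -> c 0 k ^+ 2 = 1) ->
    dotv (row i B) (c *m B) = 0.
  move=> c_i c_signs; apply: (norm_retrieval_orthogonal phi_unit phi_nr).
  - exact: dotv_dual_basis.
  - by rewrite dotv_mul_dual_basis.
  - by move=> k k_neq_i; rewrite dotv_mul_dual_basis c_signs.
pose c : 'rV[R]_N := \row_k (k != i)%:R.
pose c' := c - 2 *: delta_mx 0 j.
have c'_i : c' 0 i = 0 by rewrite !mxE eqxx (negPf i_neq_j) /=; ring.
have c'_signs k : k != i -> c' 0 k ^+ 2 = 1.
  by move=> k_neq_i; rewrite !mxE k_neq_i eqxx; case: (k == j) => /=; ring.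
have := orth_signs c' c'_i c'_signs.
rewrite mulmxBl -scalemxAl -rowE dotvDr dotvNr dotvZr orth_signs ?sub0r.
- by move/eqP; rewrite oppr_eq0 mulf_eq0 pnatr_eq0 => /eqP.
- by rewrite mxE eqxx.
- by move=> k k_neq_i; rewrite mxE k_neq_i expr1n.
Qed.

End DualBasis.

Theorem mainTheorem1 (R : rcfType) (N : nat) (phi : 'I_N -> 'rV[R]_N) :
  (forall i, normv (phi i) = 1) ->
  lin_indep phi ->
  hyperplanes_norm_retrieval phi ->
  orthonormal_family phi /\ row_full (\matrix_(i < N) phi i).
Proof.
move=> phi_norm1 phi_free phi_nr.
have phi_unit i : dotv (phi i) (phi i) = 1 by rewrite -sqr_normv phi_norm1 expr1n.
split; last by rewrite row_full_unit lin_indep_unitmx.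
set A := \matrix_(i < N) phi i; set B := dual_basis phi.
have gram1 : A *m A^T = 1%:M.
  apply: (@diag_mulmx_eq1 _ _ (B *m B^T)).
  - apply/is_diag_mxP => i j i_neq_j; rewrite -dotv_row.
    exact: dual_basis_orthogonal.
  - exact: gram_dual_basisK.
  - by move=> i; rewrite -dotv_row rowK.
by move=> i j; rewrite -[phi i](rowK phi) -[phi j](rowK phi) dotv_row gram1 mxE.
Qed.
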